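(* Let $(a_n)_{n\ge0}$ be a sequence of positive real numbers satisfying $\frac{a_{n+1}}{a_n}=\frac{an+b}{cn+d}$ for all $n\ge0$, where $a,b,c,d\ge0$ are real, $c\le d$, $a$ and $b$ are not both zero, and $c$ and $d$ are not both zero. Then for every $n\ge 0$ the polynomial $p_n(x)=\sum_{i=0}^n a_ix^i$ has exactly $n\bmod 2$ real roots counted with multiplicity (no real root if $n$ is even, exactly one if $n$ is odd). *)

From HB Require Import structures.
From mathcomp Require Import all_boot all_order all_algebra.
From mathcomp Require Import all_classical all_reals.
Set Implicit Arguments. Unset Strict Implicit. Unset Printing Implicit Defensive.
Import Order.TTheory GRing.Theory Num.Theory.
Local Open Scope ring_scope.

Definition partial_poly (R : realType) (a : nat -> R) (n : nat) : {poly R} :=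
  \sum_(i < n.+1) a i *: 'X^i.

Definition num_real_roots_mult (R : realType) (p : {poly R}) (k : nat) : Prop :=
  exists rs : seq R,
    [/\ uniq rs, (forall x : R, root p x <-> x \in rs)
      & (\sum_(x <- rs) mup x p)%N = k].

From HB Require Import structures.
From mathcomp Require Import all_boot all_order all_algebra.
From mathcomp Require Import all_classical all_reals.
From mathcomp Require Import polyrcf ring lra.
Set Implicit Arguments. Unset Strict Implicit. Unset Printing Implicit Defensive.
Import Order.TTheory GRing.Theory Num.Theory.
Local Open Scope ring_scope.

(* The argument rests on a telescoping identity (partial_poly_ode):
       X (c - a X) p_n' + ((d - c) - b X) p_n = (d - c) s_0 - K_n X^(n+1),  K_n > 0.
   Since p_n has positive coefficients, all its real roots are negative, and the
   weight X (c - a X) is nonpositive there; at a real root r the identity reads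
       r (c - a r) p_n'(r) = (d - c) s_0 - K_n r^(n+1).
   The first section proves sign facts valid for any real polynomial p at
   consecutive real roots: p' >= 0 (and p'' >= 0 if p'(r) = 0) at the largest
   root r below a point where p > 0, and p' <= 0 at the root preceding a root
   where p' > 0.  The second section combines them with the identity:
   - n even: r^(n+1) < 0 makes the right-hand side positive at the largest root,
     contradicting the sign of the left-hand side, so p_n has no real root;
   - n odd: p_n has a root (odd degree); its largest root r is simple (otherwise
     the derivative of the identity gives a contradiction), and a smaller root
     would yield a previous root r' < r where r'^(n+1) > r^(n+1) forces the
     right-hand side, hence p_n'(r'), to have the wrong sign. *)

Section RealPolynomialRoots.
Variable R : rcfType.
Implicit Types (p q : {poly R}) (r t u v x : R).

Definition root_free p u v := forall z, u < z -> z < v -> ~~ root p z.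

Lemma largest_root_below p x t :
  p != 0 -> root p x -> x < t -> exists r, [/\ root p r, r < t & root_free p r t].
Proof.
move=> p0 px xt; case: (prev_rootP p (x - 1) t).
- by move/eqP: p0.
- move=> r _ /rootP pr; rewrite in_itv /= => /andP[_ rt] free.
  by exists r; split=> // z rz zt; apply: free; rewrite in_itv /= rz.
- move=> m _ _ free; exfalso.
  have x_in : x \in `](x - 1), t[ by rewrite in_itv /= xt andbT; lra.
  by move: (free x x_in); rewrite px.
Qed.

(* If p = q (X - r)^k is positive at t and has no root in ]r, t[, then
   q(r) >= 0: otherwise q, hence p, would be negative just right of r and the
   intermediate value theorem would produce a root in ]r, t[. *)
Lemma cofactor_nonneg_at_last_root p q r t k :
  r < t -> 0 < p.[t] -> p = q * ('X - r%:P) ^+ k -> root_free p r t -> 0 <= q.[r].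
Proof.
move=> rt pt pE free; rewrite leNgt; apply/negP => qr.
have nqr : 0 < - q.[r] by rewrite oppr_gt0.
have [del del0 near_r] := poly_cont r q nqr.
pose y := r + Num.min del (t - r) / 2.
have m0 : 0 < Num.min del (t - r) by rewrite lt_min del0 subr_gt0.
have m1 : Num.min del (t - r) <= del by rewrite ge_min lexx.
have m2 : Num.min del (t - r) <= t - r by rewrite ge_min lexx orbT.
have ry : r < y by rewrite /y ltrDl divr_gt0.
have yt : y < t by rewrite /y; lra.
have close : `|y - r| < del by rewrite ger0_norm /y; lra.
have qy : q.[y] < 0 by have := near_r y close; rewrite ltr_norml => /andP[_]; lra.
have py : p.[y] < 0.
  by rewrite pE hornerM horner_exp !hornerE pmulr_llt0 // exprn_gt0 // subr_gt0.
have sign_change : p.[y] * p.[t] < 0 by rewrite pmulr_llt0.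
have [z] := poly_ivtoo (ltW yt) sign_change.
rewrite in_itv /= => /andP[yz zt] pz.
by move: (free z (lt_trans ry yz) zt); rewrite pz.
Qed.

Lemma deriv_factor_at q r : (q * ('X - r%:P))^`().[r] = q.[r].
Proof. by rewrite derivM derivXsubC !hornerE subrr; ring. Qed.

Lemma deriv2_double_factor_at q r : (q * ('X - r%:P) ^+ 2)^`(2).[r] = q.[r] *+ 2.
Proof.
rewrite /= !(derivM, derivB, derivX, derivC, derivD, derivXsubC, expr2).
rewrite !(hornerD, hornerM, hornerN, hornerC, hornerX, hornerXsubC, horner0) subrr; ring.
Qed.

Lemma mup_simple_root p r : root p r -> p^`().[r] != 0 -> mup r p = 1%N.
Proof.
move=> /factor_theorem[q ->]; rewrite deriv_factor_at => qr.
by rewrite mupMr // -(expr1 ('X - r%:P)) mup_XsubCX eqxx.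
Qed.

Lemma deriv_nonneg_at_last_root p r t :
  root p r -> r < t -> 0 < p.[t] -> root_free p r t -> 0 <= p^`().[r].
Proof.
move=> /factor_theorem[q pE] rt pt free; rewrite pE deriv_factor_at.
have pE1 : p = q * ('X - r%:P) ^+ 1 by rewrite expr1.
exact: cofactor_nonneg_at_last_root rt pt pE1 free.
Qed.

Lemma deriv2_nonneg_at_last_root p r t :
  root p r -> p^`().[r] = 0 -> r < t -> 0 < p.[t] -> root_free p r t ->
  0 <= p^`(2).[r].
Proof.
move=> /factor_theorem[q pE] p'r rt pt free.
have /rootP/factor_theorem[q2 qE] : q.[r] = 0 by rewrite -p'r pE deriv_factor_at.
have p2E : p = q2 * ('X - r%:P) ^+ 2 by rewrite pE qE -mulrA.
have := cofactor_nonneg_at_last_root rt pt p2E free.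
by rewrite p2E deriv2_double_factor_at pmulrn_lge0.
Qed.

(* If p increases through the root r, then at the previous root r' (no root
   in ]r', r[) p is nonincreasing: apply the cofactor lemma to p / (X - r),
   which is positive at r. *)
Lemma deriv_nonpos_at_previous_root p r' r :
  root p r' -> root p r -> r' < r -> 0 < p^`().[r] -> root_free p r' r ->
  p^`().[r'] <= 0.
Proof.
move=> pr' /factor_theorem[q pE] r'r; rewrite pE deriv_factor_at => qr free.
have qr' : root q r'.
  by move: pr'; rewrite pE rootM root_XsubC (lt_eqF r'r) orbF.
have [q3 qE] := factor_theorem q r' qr'.
have q_free : root_free q r' r.
  by move=> z r'z zr; apply: contra (free z r'z zr); rewrite rootM => ->.
have qE1 : q = q3 * ('X - r'%:P) ^+ 1 by rewrite expr1.
have q3r' := cofactor_nonneg_at_last_root r'r qr qE1 q_free.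
rewrite qE -mulrA [('X - r'%:P) * _]mulrC mulrA deriv_factor_at !hornerE.
by rewrite mulr_ge0_le0 // subr_le0 ltW.
Qed.
End RealPolynomialRoots.


Lemma even_power_lt_neg (R : realDomainType) (m : nat) (x y : R) :
  ~~ odd m -> m != 0%N -> x < y -> y <= 0 -> y ^+ m < x ^+ m.
Proof.
move=> m_even m0 xy y0.
have even_pow (z : R) : (- z) ^+ m = z ^+ m.
  by rewrite exprNn -signr_odd (negPf m_even) expr0 mul1r.
by rewrite -(even_pow x) -(even_pow y) ltrXn2r ?oppr_ge0 ?ltrN2.
Qed.

Section PartialSums.
Variables (R : realType) (s : nat -> R) (a b c d : R).
Hypothesis s_pos : forall n, 0 < s n.
Hypotheses (ha : 0 <= a) (hc : 0 <= c) (hcd : c <= d) (hd : 0 < d).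
Hypothesis s_rec : forall i : nat, (c * i%:R + d) * s i.+1 = (a * i%:R + b) * s i.

(* The coefficient K_n of the boundary term of the telescoping identity. *)
Definition tail_coef (n : nat) : R := (c * n%:R + d) * s n.+1.

Lemma tail_coef_gt0 n : 0 < tail_coef n.
Proof. by rewrite mulr_gt0 // ltr_wpDl // mulr_ge0. Qed.

(* The telescoping identity: the i-th monomial contributes u_i - u_(i+1)
   with u_i = (c i + d - c) s_i X^i, by the recurrence. *)
Lemma partial_poly_ode n :
  'X * (c%:P - a *: 'X) * (partial_poly s n)^`() + ((d - c)%:P - b *: 'X) * partial_poly s n
  = ((d - c) * s 0)%:P - tail_coef n *: 'X^(n.+1).
Proof.
pose u i := ((c * i%:R + d - c) * s i) *: ('X^i : {poly R}).
have term i : 'X * (c%:P - a *: 'X) * (s i *: ('X^i)^`())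
    + ((d - c)%:P - b *: 'X) * (s i *: 'X^i) = u i - u i.+1.
  have e : (c * i.+1%:R + d - c) * s i.+1 = (a * i%:R + b) * s i.
    by rewrite -s_rec mulrSr; congr (_ * _); ring.
  rewrite /u derivXn e -!mul_polyC; case: i {e} => [|j].
    by rewrite !mulr0n /= !expr0 expr1 !(polyCM, polyCD, polyCB, polyCN); ring.
  by rewrite /= -mulr_natr !exprS !(polyCM, polyCD, polyCB, polyCN, polyC_natr); ring.
rewrite /partial_poly raddf_sum !big_distrr -big_split /=.
under eq_bigr do rewrite derivZ term.
rewrite -(big_mkord xpredT (fun i => u i - u i.+1)).
under eq_bigr do rewrite -opprB.
rewrite sumrN telescope_sumr // opprB /u /tail_coef.
have -> : c * n.+1%:R + d - c = c * n%:R + d by rewrite mulrSr; ring.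
by rewrite mulr0 add0r expr0 -mul_polyC mulr1.
Qed.

Lemma partial_poly_pos n x : 0 <= x -> 0 < (partial_poly s n).[x].
Proof.
move=> x0; rewrite /partial_poly horner_sum big_ord_recl /= hornerZ hornerXn expr0 mulr1.
apply: ltr_pwDl => //; apply: sumr_ge0 => i _.
by rewrite hornerZ hornerXn mulr_ge0 ?exprn_ge0 // ltW.
Qed.

Lemma partial_poly_neq0 n : partial_poly s n != 0.
Proof. by apply/eqP => P0; have := partial_poly_pos n (lexx 0); rewrite P0 horner0 ltxx. Qed.

Lemma partial_poly_root_neg n x : root (partial_poly s n) x -> x < 0.
Proof. by rewrite ltNge; apply: contraL => x0; rewrite /root gt_eqF ?partial_poly_pos. Qed.

Lemma partial_poly_size n : size (partial_poly s n) = n.+1.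
Proof. by rewrite /partial_poly -poly_def size_poly_eq // gt_eqF. Qed.

Lemma weight_nonpos x : x < 0 -> x * (c - a * x) <= 0.
Proof.
move=> x0; have ax : a * x <= 0 by rewrite mulr_ge0_le0 // ltW.
by rewrite nmulr_rle0 // subr_ge0 (le_trans ax hc).
Qed.

Lemma ode_at_root n r : root (partial_poly s n) r ->
  r * (c - a * r) * (partial_poly s n)^`().[r] = (d - c) * s 0 - tail_coef n * r ^+ n.+1.
Proof.
move=> /rootP Pr; have := congr1 (horner^~ r) (partial_poly_ode n).
by rewrite !hornerE Pr mulr0 addr0.
Qed.

Lemma ode_deriv_at_double_root n r :
  root (partial_poly s n) r -> (partial_poly s n)^`().[r] = 0 ->
  r * (c - a * r) * (partial_poly s n)^`(2).[r] = - (tail_coef n * r ^+ n *+ n.+1).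
Proof.
move=> /rootP Pr P'r; have := congr1 (fun p => p^`().[r]) (partial_poly_ode n).
rewrite /= !(derivD, derivM, derivB, derivC, derivZ, derivXn) !(hornerD, hornerM, hornerN) Pr P'r.
rewrite !mulr0 !addr0 add0r derivN derivZ derivXn !hornerE hornerMn hornerXn /=.
by rewrite mulrnAr => ->.
Qed.

Lemma last_negative_root n x : root (partial_poly s n) x ->
  exists r, [/\ root (partial_poly s n) r, r < 0 & root_free (partial_poly s n) r 0].
Proof.
move=> Px; have [r [Pr r0 free]] :=
  largest_root_below (partial_poly_neq0 n) Px (partial_poly_root_neg Px).
by exists r.
Qed.

Lemma even_no_real_root n x : ~~ odd n -> ~~ root (partial_poly s n) x.
Proof.
move=> n_even; apply/negP => Px; have [r [Pr r0 free]] := last_negative_root Px.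
have P'r := deriv_nonneg_at_last_root Pr r0 (partial_poly_pos n (lexx 0)) free.
have lhs : r * (c - a * r) * (partial_poly s n)^`().[r] <= 0.
  by rewrite mulr_le0_ge0 // weight_nonpos.
have tail : tail_coef n * r ^+ n.+1 < 0.
  by rewrite pmulr_rlt0 ?tail_coef_gt0 // exprn_odd_lt0 //= n_even.
have s0 : 0 <= (d - c) * s 0 by rewrite mulr_ge0 ?subr_ge0 // ltW.
have := ode_at_root Pr; lra.
Qed.

Lemma odd_last_root_simple n r : odd n -> root (partial_poly s n) r -> r < 0 ->
  root_free (partial_poly s n) r 0 -> 0 < (partial_poly s n)^`().[r].
Proof.
move=> n_odd Pr r0 free; have P0 := partial_poly_pos n (lexx 0).
rewrite lt_def (deriv_nonneg_at_last_root Pr r0 P0 free) andbT; apply/eqP => P'r.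
have P''r := deriv2_nonneg_at_last_root Pr P'r r0 P0 free.
have lhs : r * (c - a * r) * (partial_poly s n)^`(2).[r] <= 0.
  by rewrite mulr_le0_ge0 // weight_nonpos.
have rhs : tail_coef n * r ^+ n *+ n.+1 < 0.
  by rewrite pmulrn_llt0 // pmulr_rlt0 ?tail_coef_gt0 // exprn_odd_lt0.
have := ode_deriv_at_double_root Pr P'r; lra.
Qed.

Lemma odd_root_unique n r x : odd n -> root (partial_poly s n) r -> r < 0 ->
  root_free (partial_poly s n) r 0 -> root (partial_poly s n) x -> x = r.
Proof.
move=> n_odd Pr r0 free Px; have P'r := odd_last_root_simple n_odd Pr r0 free.
case: (ltgtP x r) => // [xr|rx]; last first.
  by move: (free x rx (partial_poly_root_neg Px)); rewrite Px.
have [r' [Pr' r'r free']] := largest_root_below (partial_poly_neq0 n) Px xr.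
have P'r' := deriv_nonpos_at_previous_root Pr' Pr r'r P'r free'.
have g_r : r * (c - a * r) * (partial_poly s n)^`().[r] <= 0.
  by rewrite mulr_le0_ge0 ?weight_nonpos // ltW.
have g_r' : 0 <= r' * (c - a * r') * (partial_poly s n)^`().[r'].
  by rewrite mulr_le0 ?weight_nonpos // (lt_trans r'r).
have pow : r ^+ n.+1 < r' ^+ n.+1 by rewrite even_power_lt_neg //= ?n_odd // ltW.
have tail : tail_coef n * r ^+ n.+1 < tail_coef n * r' ^+ n.+1.
  by rewrite ltr_pM2l ?tail_coef_gt0.
have := ode_at_root Pr; have := ode_at_root Pr'; lra.
Qed.

End PartialSums.

Theorem theorem8p2 (R : realType) (s : nat -> R) (a b c d : R)
  (hpos : forall n : nat, 0 < s n)
  (hrec : forall n : nat, s n.+1 / s n = (a * n%:R + b) / (c * n%:R + d))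
  (ha : 0 <= a) (hb : 0 <= b) (hc : 0 <= c) (hd : 0 <= d)
  (hcd : c <= d) (hab : ~ (a = 0 /\ b = 0)) (hcd0 : ~ (c = 0 /\ d = 0)) :
  forall n : nat, num_real_roots_mult (partial_poly s n) (n %% 2)%N.
Proof.
have d_gt0 : 0 < d.
  by rewrite lt_neqAle hd andbT eq_sym; apply/eqP => d0; apply: hcd0; split => //; lra.
have s_rec i : (c * i%:R + d) * s i.+1 = (a * i%:R + b) * s i.
  have den : c * i%:R + d != 0 by rewrite gt_eqF // ltr_wpDl // mulr_ge0.
  by rewrite -[s i.+1](divfK (lt0r_neq0 (hpos i))) hrec; field.
move=> n; rewrite modn2; case: (boolP (odd n)) => n_odd /=; last first.
  exists [::]; split=> //; last by rewrite big_nil.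
  move=> x; split=> // Px.
  by have := even_no_real_root hpos ha hc hcd d_gt0 s_rec x n_odd; rewrite Px.
have [x Px] : {x | root (partial_poly s n) x}.
  by apply: odd_poly_root; rewrite (partial_poly_size hpos) /= n_odd.
have [r [Pr r0 free]] := last_negative_root hpos Px.
have P'r := odd_last_root_simple hpos ha hc d_gt0 s_rec n_odd Pr r0 free.
exists [:: r]; split=> //.
- move=> y; rewrite inE; split=> [Py|/eqP-> //].
  by rewrite (odd_root_unique hpos ha hc d_gt0 s_rec n_odd Pr r0 free Py).
- by rewrite big_seq1 mup_simple_root // lt0r_neq0.
Qed.
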